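(* For every finite simple graph $G$, $\mathrm{SEDF}^0(G)\subseteq \mathrm{SEDF}(G)$.
   Context: For a simple graph $G$ and $f:E(G)\to\{1,-1\}$, write $f(v)=\sum_{e\in E_G(v)}f(e)$ for $v\in V(G)$, where $E_G(v)$ is the set of edges incident with $v$. $\mathrm{SEDF}(G)$ is the set of functions $f:E(G)\to\{1,-1\}$ with $\sum_{e'\in N[e]}f(e')\ge1$ for every edge $e=uv$, where $N[e]=E_G(u)\cup E_G(v)$. $\mathrm{SEDF}^0(G)$ is the set of functions $f:E(G)\to\{1,-1\}$ such that (a) $f(v)\ge 0$ for all $v\in V(G)$, and (b) $f(u)+f(v)\ge 2$ for every edge $e=uv$ with $f(e)=1$. *)

From mathcomp Require Import all_boot all_order all_algebra.
Set Implicit Arguments. Unset Strict Implicit. Unset Printing Implicit Defensive.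
Import Order.TTheory GRing.Theory Num.Theory.
Local Open Scope ring_scope.

(* A finite simple graph: vertex set a finType V, adjacency a symmetric
   irreflexive boolean relation. An edge uv is represented as the 2-set [set u; v]. *)
Definition simple_graph (V : finType) (adj : rel V) : Prop :=
  symmetric adj /\ irreflexive adj.

Definition edges (V : finType) (adj : rel V) : {set {set V}} :=
  [set e : {set V} | [exists u, exists v, adj u v && (e == [set u; v])]].

(* edge functions E(G) -> {1,-1}; only values on edges matter *)
Definition signed_on (V : finType) (adj : rel V) (f : {set V} -> int) : Prop :=
  forall e, e \in edges adj -> f e = 1 \/ f e = -1.

Definition fv (V : finType) (adj : rel V) (f : {set V} -> int) (v : V) : int :=
  \sum_(e in edges adj | v \in e) f e.

(* sum of f over N[e] = E(u) ∪ E(v) for e = uv, i.e. edges meeting e *)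
Definition fN (V : finType) (adj : rel V) (f : {set V} -> int) (e : {set V}) : int :=
  \sum_(e' in edges adj | e' :&: e != set0) f e'.

Definition SEDF (V : finType) (adj : rel V) (f : {set V} -> int) : Prop :=
  signed_on adj f /\ forall e, e \in edges adj -> 1 <= fN adj f e.

Definition SEDF0 (V : finType) (adj : rel V) (f : {set V} -> int) : Prop :=
  signed_on adj f /\
  (forall v, 0 <= fv adj f v) /\
  (forall u v, adj u v -> f [set u; v] = 1 -> 2 <= fv adj f u + fv adj f v).

From mathcomp Require Import all_boot all_order all_algebra.
From mathcomp Require Import zify.
Set Implicit Arguments. Unset Strict Implicit. Unset Printing Implicit Defensive.
Import Order.TTheory GRing.Theory Num.Theory.
Local Open Scope ring_scope.

(* For an edge e = uv, N[e] = E(u) ∪ E(v) and E(u) ∩ E(v) = {e}, so inclusion-exclusion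
   gives sum_{N[e]} f = f(u) + f(v) - f(e).  If f(e) = 1 this is at least 2 - 1 by the
   second condition of SEDF0; if f(e) = -1 it is at least 0 + 0 + 1 by the first. *)

Lemma meets_pair (V : finType) (A : {set V}) (u v : V) :
  (A :&: [set u; v] != set0) = (u \in A) || (v \in A).
Proof.
apply/set0Pn/orP => [[x /setIP[xA /set2P[]<-]] | [uA | vA]]; [by left | by right | ..].
  by exists u; rewrite !inE uA eqxx.
by exists v; rewrite !inE vA eqxx orbT.
Qed.

Lemma pair_eq_of_mem (V : finType) (a b u v : V) : u != v ->
  u \in [set a; b] -> v \in [set a; b] -> [set a; b] = [set u; v].
Proof.
move=> neq_uv /set2P[] eq_u /set2P[] eq_v; subst; rewrite ?eqxx // in neq_uv.
by rewrite setUC.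
Qed.

Section Edges.

Variables (V : finType) (adj : rel V).

Lemma edgesP (e : {set V}) :
  reflect (exists u v, adj u v /\ e = [set u; v]) (e \in edges adj).
Proof.
rewrite inE; apply: (iffP existsP) => [[u /existsP[v /andP[uv /eqP->]]] | [u [v [uv ->]]]].
  by exists u, v.
by exists u; apply/existsP; exists v; rewrite uv eqxx.
Qed.

Lemma edge_eq_pair (e : {set V}) (u v : V) : u != v ->
  e \in edges adj -> u \in e -> v \in e -> e = [set u; v].
Proof. by move=> neq_uv /edgesP[a [b [_ ->]]]; apply: pair_eq_of_mem. Qed.

Lemma fN_pair (f : {set V} -> int) (u v : V) : u != v ->
  [set u; v] \in edges adj ->
  fN adj f [set u; v] = fv adj f u + fv adj f v - f [set u; v].
Proof.
move=> neq_uv uv_edge.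
have -> : f [set u; v] = \sum_(e in edges adj | (u \in e) && (v \in e)) f e.
  apply/esym/big_pred1 => e /=; apply/idP/eqP => [/and3P[] | ->].
    exact: edge_eq_pair.
  by rewrite uv_edge !inE !eqxx orbT.
rewrite /fN /fv !big_mkcondr -big_split -sumrB; apply: eq_bigr => e _ /=.
by rewrite meets_pair; case: (u \in e); case: (v \in e) => /=; lia.
Qed.

End Edges.

Theorem lemma2p1 (V : finType) (adj : rel V) (f : {set V} -> int) :
  simple_graph adj -> SEDF0 adj f -> SEDF adj f.
Proof.
move=> [_ irr] [signed [fv_ge0 fv_pos_edge]]; split=> // e e_edge.
have /edgesP[u [v [uv e_uv]]] := e_edge; subst e.
have neq_uv : u != v by apply: contraTneq uv => ->; rewrite irr.
rewrite fN_pair //; have := fv_ge0 u; have := fv_ge0 v.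
case: (signed _ e_edge) => f_uv; rewrite f_uv; last lia.
by have := fv_pos_edge u v uv f_uv; lia.
Qed.
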